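(* Let $R$ be a commutative ring with unit, $\mathcal{P}$ a poset satisfying the descending chain condition, $F\colon\mathcal{P}\to R\text{-mod}$ a functor, and $i\in\mathcal{P}$. If $F$ is pseudo-projective at $i$, then the natural map $\operatorname{colim}_{\mathcal{P}_{<i}}F\to F(i)$ is injective.
   Context: DCC: no infinite strictly descending chains. $\mathcal{P}_{<i}=\{j:j<i\}$, $\mathcal{P}_{\le i}=\{j:j\le i\}$. $F(j<i)$ is the image of the arrow $j\to i$, $F(i<i)=1$. $\operatorname{Im}_F(j)=\sum_{k<j}\operatorname{Im}F(k<j)$; $\max J$ is the set of maximal elements of $J$. $F$ is pseudo-projective at $i$ if for every finite $J\subset\mathcal{P}_{\le i}$ and every $\oplus_{j\in J}x_j\in\bigoplus_{j\in J}F(j)$ with $\sum_{j\in J}F(j<i)(x_j)=0$, one has $x_j\in\operatorname{Im}_F(j)$ for all $j\in\max J$. *)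

From HB Require Import structures.
From mathcomp Require Import all_boot all_order all_algebra.
Set Implicit Arguments. Unset Strict Implicit. Unset Printing Implicit Defensive.
Import Order.TTheory GRing.Theory.
Local Open Scope order_scope.

Section Defs.
Variables (R : comPzRingType) (d : Order.disp_t) (P : porderType d).

Definition dcc : Prop := forall f : nat -> P, ~ (forall n, f n.+1 < f n).

(* A functor F : P -> R-mod: objects F j, arrows Fm j k (meaningful for j <= k;
   values of Fm j k for j not <= k are irrelevant and never used). *)
Definition is_functor (F : P -> lmodType R) (Fm : forall j k, {linear F j -> F k}) : Prop :=
  (forall j (x : F j), Fm j j x = x) /\
  (forall j k l (x : F j), j <= k -> k <= l -> Fm j l x = Fm k l (Fm j k x)).

Definition ImF (F : P -> lmodType R) (Fm : forall j k, {linear F j -> F k})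
  (j : P) (x : F j) : Prop :=
  exists (s : seq P) (y : forall k, F k),
    (forall k, k \in s -> k < j) /\ x = (\sum_(k <- s) Fm k j (y k))%R.

Definition is_max_in (J : seq P) (j : P) : Prop :=
  j \in J /\ forall k, k \in J -> ~ (j < k).

(* F is pseudo-projective at i. Finite subsets J of P_{<=i} are given as
   duplicate-free lists; an element of (+)_{j in J} F(j) is a family x
   (only its values on J matter). *)
Definition pseudo_projective_at (F : P -> lmodType R)
  (Fm : forall j k, {linear F j -> F k}) (i : P) : Prop :=
  forall (J : seq P) (x : forall j, F j),
    uniq J -> (forall j, j \in J -> j <= i) ->
    (\sum_(j <- J) Fm j i (x j))%R = 0%R ->
    forall j, is_max_in J j -> ImF Fm (x j).

Definition cocone_lt (F : P -> lmodType R) (Fm : forall j k, {linear F j -> F k})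
  (i : P) (M : lmodType R) (g : forall j, {linear F j -> M}) : Prop :=
  forall j k (x : F j), j < k -> k < i -> g k (Fm j k x) = g j x.

Definition is_colimit_lt (F : P -> lmodType R) (Fm : forall j k, {linear F j -> F k})
  (i : P) (C : lmodType R) (iota : forall j, {linear F j -> C}) : Prop :=
  cocone_lt Fm i iota /\
  forall (M : lmodType R) (g : forall j, {linear F j -> M}),
    cocone_lt Fm i g ->
    exists h : {linear C -> M},
      (forall j (x : F j), j < i -> h (iota j x) = g j x) /\
      forall h' : {linear C -> M},
        (forall j (x : F j), j < i -> h' (iota j x) = g j x) -> forall c, h' c = h c.

End Defs.

From HB Require Import structures.
From mathcomp Require Import all_boot all_order all_algebra.
From mathcomp Require Import boolp.
From Stdlib Require Import Inverse_Image.
Set Implicit Arguments. Unset Strict Implicit. Unset Printing Implicit Defensive.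
Import Order.TTheory GRing.Theory.
Local Open Scope order_scope.

(* Every element of the colimit is the image [sum_j iota_j x_j] of a finite
   formal sum with indices [j < i], and it lies in the kernel of [u] iff
   [sum_j F(j < i) x_j = 0].  Group the formal sum by index and pick a maximal
   index [j]: pseudo-projectivity writes the [j]-component as a sum of images
   [F(k < j) y_k] with [k < j].  Substituting them changes the image in no
   cocone over [P_{<i}] (in particular neither in the colimit nor in [F i]),
   and replaces [j] in the multiset of indices by strictly smaller ones.  By
   the descending chain condition the multiset order is well founded, so the
   formal sum can be reduced to the empty one, whose image is [0]. *)

Lemma wf_of_no_descending_chain (T : Type) (r : T -> T -> Prop) :
  (forall f : nat -> T, ~ (forall n, r (f n.+1) (f n))) -> well_founded r.
Proof.
move=> no_chain a; apply: contrapT => not_acc_a.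
have has_pred (x : {x | ~ Acc r x}) : exists y : {y | ~ Acc r y}, r (sval y) (sval x).
  case: x => x not_acc_x /=; apply: contrapT => no_pred; apply: not_acc_x.
  constructor => y ryx; apply: contrapT => not_acc_y.
  by apply: no_pred; exists (exist _ y not_acc_y).
pose next x := sval (cid (has_pred x)).
have next_lt x : r (sval (next x)) (sval x) := svalP (cid (has_pred x)).
apply: (no_chain (fun n => sval (iter n next (exist _ a not_acc_a)))) => n.
exact: next_lt.
Qed.

Lemma partition_big_undup (I K : eqType) (V : nmodType)
    (f : I -> K) (s : seq I) (G : I -> V) :
  (\sum_(k <- undup (map f s)) \sum_(x <- s | f x == k) G x = \sum_(x <- s) G x)%R.
Proof.
under eq_bigr do rewrite big_mkcond.
rewrite exchange_big /=; apply: eq_big_seq => x xs.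
rewrite (bigD1_seq (f x)) ?undup_uniq ?mem_undup ?map_f //= eqxx.
by rewrite big1 ?addr0 // => k /negPf; rewrite eq_sym => ->.
Qed.

Section MultisetStep.
Variables (T : eqType) (r : rel T).

(* One step of the Dershowitz-Manna multiset extension of [r]. *)
Definition mset_step (l' l : seq T) : Prop :=
  exists2 j, j \in l &
  exists2 s, all (r^~ j) s & perm_eq l' ([seq k <- l | k != j] ++ s).

Lemma Acc_mset_step_perm l1 l2 :
  perm_eq l1 l2 -> Acc mset_step l1 -> Acc mset_step l2.
Proof.
move=> l12 acc1; constructor => l' [j jl2 [s sj l'_eq]]; apply: (Acc_inv acc1).
exists j; first by rewrite (perm_mem l12).
by exists s; rewrite // (permPl l'_eq) perm_cat2r; apply: perm_filter; rewrite perm_sym.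
Qed.

Lemma Acc_mset_step_filter a l :
  Acc mset_step l -> Acc mset_step [seq k <- l | k != a].
Proof.
have [al acc_l|al acc_l] := boolP (a \in l).
  by apply: (Acc_inv acc_l); exists a => //; exists [::]; rewrite ?cats0.
suff -> : [seq k <- l | k != a] = l by [].
by apply/all_filterP/allP => k kl; apply: contraNneq al => <-.
Qed.

Hypothesis r_wf : well_founded r.

Lemma Acc_mset_step_cons a l : Acc mset_step l -> Acc mset_step (a :: l).
Proof.
elim/(well_founded_ind r_wf): a l => a IHa l acc_l.
elim: acc_l => {}l acc_l IHl.
constructor => l' [j jal [s sj l'_eq]].
apply: (Acc_mset_step_perm (l1 := [seq k <- a :: l | k != j] ++ s));
  first by rewrite perm_sym.
move: sj {l'_eq}; have [-> sa|ja sj] := eqVneq j a; rewrite /= ?eqxx /=.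
  apply: (Acc_mset_step_perm (l1 := s ++ _)); first by rewrite perm_catC.
  elim: s sa => [_|b s IHs /= /andP[ba sa]]; last exact: IHa (IHs sa).
  exact: Acc_mset_step_filter (Acc_intro l acc_l).
rewrite eq_sym ja; apply: IHl; rewrite inE (negPf ja) /= in jal.
by exists j => //; exists s.
Qed.

Lemma mset_step_wf : well_founded mset_step.
Proof.
elim=> [|a l IHl]; last exact: Acc_mset_step_cons.
by constructor => l' [j].
Qed.

End MultisetStep.

Lemma exists_max_in (d : Order.disp_t) (P : porderType d) (J : seq P) :
  J != [::] -> exists j, is_max_in J j.
Proof.
elim: J => [//|a J IHJ] _.
have [->|/IHJ[m [mJ m_max]]] := eqVneq J [::].
  by exists a; split=> [|k]; rewrite ?mem_head // inE => /eqP->; rewrite ltxx.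
have [ma|not_ma] := boolP (m < a).
  exists a; split=> [|k]; first exact: mem_head.
  rewrite inE => /predU1P[->|kJ]; first by rewrite ltxx.
  by move=> ak; apply: (m_max k kJ); apply: lt_trans ak.
exists m; split=> [|k]; first by rewrite inE mJ orbT.
by rewrite inE => /predU1P[->|/m_max//]; apply/negP.
Qed.

Section FormalSums.
Variables (R : comPzRingType) (d : Order.disp_t) (P : porderType d)
  (F : P -> lmodType R) (Fm : forall j k, {linear F j -> F k}) (i : P).

Definition tags (L : seq {k : P & F k}) : seq P := map tag L.

Definition sum_along (M : lmodType R) (g : forall j, {linear F j -> M})
    (L : seq {k : P & F k}) : M :=
  (\sum_(p <- L) g (tag p) (tagged p))%R.

Definition group_at (L : seq {k : P & F k}) (k : P) : F k :=
  (\sum_(p <- L | tag p == k) Fm (tag p) k (tagged p))%R.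

Hypothesis F_functor : is_functor Fm.

Lemma functor_cocone : cocone_lt Fm i (fun j => Fm j i).
Proof. by move=> j k x jk ki; rewrite -(proj2 F_functor) ?ltW. Qed.

Lemma sum_group_at (M : lmodType R) (g : forall j, {linear F j -> M})
    (L : seq {k : P & F k}) (k : P) :
  g k (group_at L k) = (\sum_(p <- L | tag p == k) g (tag p) (tagged p))%R.
Proof.
rewrite linear_sum; apply: eq_bigr => -[j x] /eqP /= <-.
by rewrite (proj1 F_functor).
Qed.

Lemma sum_along_group_at (M : lmodType R) (g : forall j, {linear F j -> M})
    (L : seq {k : P & F k}) :
  (\sum_(k <- undup (tags L)) g k (group_at L k))%R = sum_along g L.
Proof.
rewrite -[RHS](partition_big_undup tag).
by apply: eq_bigr => k _; apply: sum_group_at.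
Qed.

Lemma sum_along_replace (M : lmodType R) (g : forall j, {linear F j -> M})
    (L : seq {k : P & F k}) (j : P) (s : seq P) (y : forall k, F k) :
  cocone_lt Fm i g -> j < i -> (forall k, k \in s -> k < j) ->
  group_at L j = (\sum_(k <- s) Fm k j (y k))%R ->
  sum_along g ([seq p <- L | tag p != j] ++ [seq Tagged F (y k) | k <- s])
  = sum_along g L.
Proof.
move=> g_cocone ji sj group_eq.
rewrite /sum_along big_cat big_filter big_map /=.
rewrite [RHS](bigID (fun p => tag p == j)) /= addrC; congr (_ + _)%R.
rewrite -sum_group_at group_eq linear_sum; apply: eq_big_seq => k ks.
by rewrite g_cocone ?sj.
Qed.

Lemma tags_replace (L : seq {k : P & F k}) (j : P) (s : seq P) (y : forall k, F k) :
  tags ([seq p <- L | tag p != j] ++ [seq Tagged F (y k) | k <- s])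
  = [seq k <- tags L | k != j] ++ s.
Proof. by rewrite /tags map_cat filter_map -map_comp map_id. Qed.

Hypotheses (P_wf : well_founded (fun j k : P => j < k))
  (F_pp : pseudo_projective_at Fm i).

Lemma group_at_max_ImF (L : seq {k : P & F k}) (j : P) :
  all (< i) (tags L) -> sum_along (fun k => Fm k i) L = 0%R ->
  is_max_in (undup (tags L)) j -> ImF Fm (group_at L j).
Proof.
move=> /allP Li L0; apply: F_pp; rewrite ?undup_uniq ?sum_along_group_at //.
by move=> k; rewrite mem_undup => /Li/ltW.
Qed.

Lemma cocone_sum_eq0 (M : lmodType R) (g : forall j, {linear F j -> M})
    (L : seq {k : P & F k}) :
  cocone_lt Fm i g -> all (< i) (tags L) ->
  sum_along (fun k => Fm k i) L = 0%R -> sum_along g L = 0%R.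
Proof.
move=> g_cocone; elim/(well_founded_ind
  (wf_inverse_image _ _ _ tags (mset_step_wf P_wf))): L => L IHL Li L0.
have [->|L_neq0] := eqVneq L [::]; first by rewrite /sum_along big_nil.
have [j j_max] : exists j, is_max_in (undup (tags L)) j.
  apply: exists_max_in; by apply: contra_neq L_neq0 => /undup_nil; case: (L).
have [s [y [sj group_eq]]] := group_at_max_ImF Li L0 j_max.
have jL : j \in tags L by rewrite -mem_undup; case: j_max.
have ji : j < i := allP Li j jL.
have replace (M' : lmodType R) (g' : forall k, {linear F k -> M'})
  (g'_cocone : cocone_lt Fm i g') := sum_along_replace g'_cocone ji sj group_eq.
rewrite -replace //; apply: IHL; rewrite ?replace ?tags_replace //.
- by exists j => //; exists s; first exact/allP.
- rewrite all_cat all_filter; apply/andP; split.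
    by apply: sub_all Li => k ki; apply/implyP.
  by apply/allP => k /sj/lt_trans; apply.
- exact: functor_cocone.
Qed.

End FormalSums.

Section ColimitSpan.
Variables (R : comPzRingType) (d : Order.disp_t) (P : porderType d)
  (F : P -> lmodType R) (Fm : forall j k, {linear F j -> F k}) (i : P)
  (C : lmodType R) (iota : forall j, {linear F j -> C}).
Local Open Scope ring_scope.

Definition span_lt : pred C :=
  fun c => `[< exists2 L, all (< i)%O (tags L) & c = sum_along iota L >].

Lemma span_lt_submod_closed : submod_closed span_lt.
Proof.
split=> [|a c c' /asboolP[L Li ->] /asboolP[L' L'i ->]]; apply/asboolP.
  by exists [::]; rewrite // /sum_along big_nil.
exists ([seq Tagged F (a *: tagged p) | p : {k : P & F k} <- L] ++ L').
  by rewrite /tags map_cat -map_comp all_cat; apply/andP.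
rewrite /sum_along big_cat big_map scaler_sumr /=; congr (_ + _).
by apply: eq_bigr => p _; rewrite linearZ.
Qed.

Definition span_lt_sub := {c : C | span_lt c}.
HB.instance Definition _ := [isSub of span_lt_sub for @sval C span_lt].
HB.instance Definition _ := [Choice of span_lt_sub by <:].
HB.instance Definition _ := GRing.SubChoice_isSubLmodule.Build R C span_lt
  span_lt_sub span_lt_submod_closed.

Definition corestrict j : F j -> span_lt_sub :=
  fun x => if (j < i)%O then insubd 0 (iota j x) else 0.
Arguments corestrict : clear implicits.

Lemma val_corestrict j (x : F j) :
  val (corestrict j x) = if (j < i)%O then iota j x else 0.
Proof.
rewrite /corestrict; case: ifP => // ji; rewrite insubdK //.
by apply/asboolP; exists [:: Tagged F x]; rewrite /= ?ji // /sum_along big_seq1.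
Qed.

Lemma corestrict_is_linear j : linear (corestrict j).
Proof.
move=> a x y; apply: val_inj; rewrite linearP /= !val_corestrict.
by case: ifP; rewrite ?linearP ?scaler0 ?addr0.
Qed.

HB.instance Definition _ j := GRing.isLinear.Build R (F j) span_lt_sub *:%R
  (corestrict j) (@corestrict_is_linear j).

Lemma colimit_span_lt : is_colimit_lt Fm i iota -> forall c, span_lt c.
Proof.
move=> [iota_cocone iota_univ] c.
have corestrict_cocone : cocone_lt Fm i (fun j => corestrict j : {linear _ -> _}).
  move=> j k x jk ki; apply: val_inj; rewrite !val_corestrict ki (lt_trans jk ki).
  exact: iota_cocone.
have [h [h_iota _]] := iota_univ _ _ corestrict_cocone.
have [h0 [_ iota_unique]] := iota_univ _ _ iota_cocone.
(* [val \o h] fixes every [iota j], so it is the identity by uniqueness. *)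
suff <- : val (h c) = c by apply: valP.
rewrite [RHS](iota_unique idfun) //.
apply: (iota_unique (val \o h : {linear C -> C})) => j x ji /=.
by rewrite h_iota // val_corestrict ji.
Qed.

End ColimitSpan.

Theorem lemma6p2 (R : comPzRingType) (d : Order.disp_t) (P : porderType d)
  (F : P -> lmodType R) (Fm : forall j k, {linear F j -> F k}) (i : P)
  (C : lmodType R) (iota : forall j, {linear F j -> C})
  (u : {linear C -> F i}) :
  dcc P -> is_functor Fm -> pseudo_projective_at Fm i ->
  is_colimit_lt Fm i iota ->
  (forall j (x : F j), j < i -> u (iota j x) = Fm j i x) ->
  injective u.
Proof.
move=> P_dcc F_functor F_pp colim u_iota c c' uc_eq.
apply/eqP; rewrite -subr_eq0; apply/eqP.
have /asboolP[L Li cL] := colimit_span_lt colim (c - c').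
rewrite cL; apply: (cocone_sum_eq0 F_functor (wf_of_no_descending_chain P_dcc)
  F_pp (proj1 colim) Li).
rewrite -(subrr (u c)) {2}uc_eq -linearB cL /sum_along linear_sum.
by apply: eq_big_seq => p pL; rewrite u_iota //; exact: (allP Li _ (map_f tag pL)).
Qed.
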